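(* Let $T\in\mathcal{L}(\mathcal{H})$ have closed range. Then $T$ is normal if and only if $T$ is both an EP operator and an SD operator.
   Context: $\mathcal{H}$ is a Hilbert space, $\mathcal{L}(\mathcal{H})$ the bounded operators on it. For $T$ with closed range, $T^\dagger$ is its Moore–Penrose inverse (unique solution of $TT^\dagger T=T$, $T^\dagger TT^\dagger=T^\dagger$, $(T^\dagger T)^*=T^\dagger T$, $(TT^\dagger)^*=TT^\dagger$). $T$ is normal if $T^*T=TT^*$. $T$ is EP if it has closed range and $R(T)=R(T^* )$ (equivalently $TT^\dagger=T^\dagger T$). $T$ is SD if it has closed range and $T^*T^\dagger=T^\dagger T^*$. *)

From mathcomp Require Import all_boot all_order all_algebra.
From mathcomp Require Import reals complex.
Set Implicit Arguments. Unset Strict Implicit. Unset Printing Implicit Defensive.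
Import Order.TTheory GRing.Theory Num.Theory.
Local Open Scope ring_scope.
Local Open Scope complex_scope.

Section Hilbert.
Variables (R : realType) (H : lmodType R[i]) (ip : H -> H -> R[i]).

Definition inner_product : Prop :=
  [/\ (forall (a : R[i]) (x y z : H), ip (a *: x + y) z = a * ip x z + ip y z),
      (forall x y : H, ip y x = (ip x y)^*),
      (forall x : H, 0 <= ip x x) &
      (forall x : H, ip x x = 0 -> x = 0)].

Definition hnorm (x : H) : R[i] := sqrtC (ip x x).

Definition hcvg (u : nat -> H) (l : H) : Prop :=
  forall e : R[i], 0 < e -> exists N : nat, forall n, (N <= n)%N -> hnorm (u n - l) < e.

Definition hcauchy (u : nat -> H) : Prop :=
  forall e : R[i], 0 < e -> exists N : nat,
    forall n m, (N <= n)%N -> (N <= m)%N -> hnorm (u n - u m) < e.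

Definition hilbert_space : Prop :=
  inner_product /\ (forall u, hcauchy u -> exists l, hcvg u l).

Definition bounded_op (T : H -> H) : Prop :=
  (forall (a : R[i]) (x y : H), T (a *: x + y) = a *: T x + T y) /\
  (exists M : R[i], forall x, hnorm (T x) <= M * hnorm x).

Definition is_adjoint (T S : H -> H) : Prop :=
  forall x y, ip (T x) y = ip x (S y).

Definition closed_range (T : H -> H) : Prop :=
  forall (u : nat -> H) (l : H), (forall n, exists x, u n = T x) -> hcvg u l ->
    exists x, l = T x.

Definition moore_penrose (T Td : H -> H) : Prop :=
  [/\ (forall x, T (Td (T x)) = T x),
      (forall x, Td (T (Td x)) = Td x),
      is_adjoint (fun x => Td (T x)) (fun x => Td (T x)) &
      is_adjoint (fun x => T (Td x)) (fun x => T (Td x))].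

(* In the following, Ts is the adjoint T^* and Td the Moore-Penrose inverse. *)
Definition normal_op (T Ts : H -> H) : Prop :=
  forall x, Ts (T x) = T (Ts x).

Definition EP_op (T Ts : H -> H) : Prop :=
  closed_range T /\ (forall y, (exists x, T x = y) <-> (exists x, Ts x = y)).

Definition SD_op (T Ts Td : H -> H) : Prop :=
  closed_range T /\ (forall x, Ts (Td x) = Td (Ts x)).

End Hilbert.

From HB Require Import structures.
From mathcomp Require Import all_boot all_order all_algebra.
From mathcomp Require Import boolp classical_sets reals complex.
From mathcomp Require Import ring lra.
Set Implicit Arguments. Unset Strict Implicit. Unset Printing Implicit Defensive.
Import Order.TTheory GRing.Theory Num.Theory.
Local Open Scope ring_scope.
Local Open Scope complex_scope.

(* Write P = T T† and Q = T† T: the orthogonal projections onto ran T and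
   (ker T)^⊥.  Normality gives ‖T x‖ = ‖T* x‖, hence ker T = ker T*; for an EP
   operator, ran T = ran T* gives the same by taking orthogonal complements.
   Once ker T = ker T*, P and Q are orthogonal projections with the same kernel,
   so P = Q, and the identities T* P = T* = Q T* turn T* T† = T† T* into
   T* T = T T* and back.  The remaining inclusion ran T ⊆ ran T* for normal T
   needs completeness: ran T* is closed because T* is isometric to T, and the
   residual of the projection of T x onto it lies in ran T ∩ ker T* = 0. *)

Section SquaredModulus.
Variable R : realType.

Definition sqmod (t : R[i]) : R := complex.Re t ^+ 2 + complex.Im t ^+ 2.

Lemma sqmodE t : (sqmod t)%:C = t * t^*.
Proof. by rewrite add_Re2_Im2 sqr_normc. Qed.

Lemma sqmodR (r : R) : sqmod r%:C = r ^+ 2.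
Proof. by rewrite /sqmod /= expr0n addr0. Qed.

Lemma sqmod0 : sqmod 0 = 0.
Proof. by rewrite -(rmorph0 (real_complex R)) sqmodR expr0n. Qed.

Lemma sqmod_ge0 t : 0 <= sqmod t.
Proof. by rewrite addr_ge0 ?sqr_ge0. Qed.

Lemma sqmod_eq0 t : sqmod t = 0 -> t = 0.
Proof.
move=> /(congr1 (real_complex R)); rewrite sqmodE => /eqP.
by rewrite mulf_eq0 conjc_eq0 orbb => /eqP.
Qed.

Lemma sqmodD s t : sqmod (s + t) <= 2 * sqmod s + 2 * sqmod t.
Proof.
case: s t => [a b] [c d]; rewrite /sqmod /=.
by have := sqr_ge0 (a - c); have := sqr_ge0 (b - d); nra.
Qed.

End SquaredModulus.

Lemma inv_succ_lt (R : archiRealFieldType) (eps : R) : 0 < eps ->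
  exists N, forall n, (N <= n)%N -> n.+1%:R^-1 < eps.
Proof.
move=> eps_gt0; exists (Num.bound eps^-1) => n le_bn.
rewrite -(invrK eps) ltf_pV2 ?posrE ?invr_gt0 ?ltr0Sn //.
apply: lt_le_trans (archi_boundP _) _; first by rewrite invr_ge0 ltW.
by rewrite ler_nat ltnW.
Qed.

Lemma approx_inf (R : realType) (T : Type) (t0 : T) (f : T -> R) :
  (forall t, 0 <= f t) ->
  exists d (u : nat -> T), (forall t, d <= f t) /\ forall n, f (u n) < d + n.+1%:R^-1.
Proof.
move=> f_ge0; have inf_f : has_inf (range f).
  by split; [exists (f t0), t0 | exists 0 => _ [t _ <-]].
exists (inf (range f)).
have near_inf n : exists t, f t < inf (range f) + n.+1%:R^-1.
  have inv_gt0 : 0 < (n.+1%:R : R)^-1 by rewrite invr_gt0 ltr0Sn.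
  by have [_ [t _ <-] ?] := inf_adherent inv_gt0 inf_f; exists t.
have [u hu] := choice near_inf; exists u; split=> // t.
by apply: ge_inf inf_f.2 _ _; exists t.
Qed.

Section InnerProductSpace.
Variables (R : realType) (H : lmodType R[i]) (ip : H -> H -> R[i]).
Hypothesis hip : inner_product ip.

Let ipDZl a x y z : ip (a *: x + y) z = a * ip x z + ip y z.
Proof. by case: hip. Qed.

Let ipJ x y : ip y x = (ip x y)^*.
Proof. by case: hip. Qed.

Let ip_bilinear :
  bilinear_for (GRing.Scale.Law.clone _ _ *%R _)
               (GRing.Scale.Law.clone _ _ (Num.conj \; *%R) _) ip.
Proof.
split=> [z a x y | z a x y]; first exact: ipDZl.
by rewrite /= ipJ ipDZl rmorphD rmorphM /= -!ipJ.
Qed.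

Let ip_hermitian x y : ip x y = (-1) ^+ false * Num.conj (ip y x).
Proof. by rewrite expr0 mul1r; exact: ipJ. Qed.

Let ip_ge0 x : 0 <= ip x x.
Proof. by case: hip. Qed.

Let ip_eq0 x : ip x x = 0 -> x = 0.
Proof. by case: hip => _ _ _; apply. Qed.

Let ip_gt0 u : u != 0 -> 0 < ip u u.
Proof. by rewrite lt_def ip_ge0 andbT; apply: contra => /eqP/ip_eq0 ->. Qed.

HB.instance Definition _ :=
  bilinear_isBilinear.Build R[i] H H R[i] _ _ ip ip_bilinear.
HB.instance Definition _ :=
  isHermitianSesquilinear.Build R[i] H false Num.conj ip ip_hermitian.
HB.instance Definition _ := isDotProduct.Build R[i] H ip ip_gt0.

Lemma ip_injr a b : (forall x, ip x a = ip x b) -> a = b.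
Proof.
by move=> eq_ab; apply/subr0_eq/ip_eq0; rewrite linearBr /= eq_ab subrr.
Qed.

Lemma ip_injl a b : (forall y, ip a y = ip b y) -> a = b.
Proof. by move=> eq_ab; apply: ip_injr => x; rewrite ipJ eq_ab -ipJ. Qed.

Lemma is_adjoint_sym (T S : H -> H) : is_adjoint ip T S -> is_adjoint ip S T.
Proof. by move=> adjTS x y; rewrite ipJ -adjTS -ipJ. Qed.

Definition sqnorm x : R := complex.Re (ip x x).

Lemma ip_sqnorm x : ip x x = (sqnorm x)%:C.
Proof.
by have := ip_ge0 x; rewrite /sqnorm; case: (ip x x) => a b /andP[/eqP /= ->].
Qed.

Lemma sqnorm_ge0 x : 0 <= sqnorm x.
Proof. by rewrite -ler0c -ip_sqnorm. Qed.

Lemma sqnorm0 : sqnorm 0 = 0.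
Proof. by rewrite /sqnorm linear0l. Qed.

Lemma sqnorm_eq0 x : sqnorm x = 0 -> x = 0.
Proof. by move=> x0; apply: ip_eq0; rewrite ip_sqnorm x0. Qed.

Lemma sqnormZ c x : sqnorm (c *: x) = sqmod c * sqnorm x.
Proof.
apply: complexI; rewrite -ip_sqnorm dnormZ /= sqr_normc -sqmodE ip_sqnorm.
by rewrite rmorphM.
Qed.

Lemma sqnorm_parallelogram x y :
  sqnorm (x + y) + sqnorm (x - y) = 2 * sqnorm x + 2 * sqnorm y.
Proof.
apply: complexI; rewrite !rmorphD !rmorphM /= -!ip_sqnorm dnormD dnormB /= !ip_sqnorm.
by rewrite (rmorph_nat (real_complex R)); ring.
Qed.

Lemma sqmod_ip_le x y : sqmod (ip x y) <= sqnorm x * sqnorm y.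
Proof.
have [y0 | y_neq0] := eqVneq (sqnorm y) 0.
  by rewrite y0 mulr0 (sqnorm_eq0 y0) linear0r sqmod0.
set a := sqnorm y.
have expand : sqnorm (a%:C *: x - ip x y *: y) = a * (a * sqnorm x - sqmod (ip x y)).
  apply: complexI; rewrite -ip_sqnorm linearBl !linearBr !linearZl_LR !linearZr_LR /=.
  rewrite !rmorphM rmorphB rmorphM /= sqmodE -[Num.conj]/(@conjc R) -(ipJ x y).
  by rewrite !ip_sqnorm conjc_real -/a; ring.
have := sqnorm_ge0 (a%:C *: x - ip x y *: y); rewrite expand.
have a_gt0 : 0 < a by rewrite lt_def y_neq0 sqnorm_ge0.
by rewrite pmulr_rge0 // subr_ge0 mulrC.
Qed.

Lemma sqmod_ip_le_near_min r m (delta : R) :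
  (forall s, sqnorm r <= sqnorm (r - s *: m) + delta) ->
  sqmod (ip r m) <= sqnorm m * delta.
Proof.
move=> near_min; have [m0 | m_neq0] := eqVneq (sqnorm m) 0.
  by rewrite m0 mul0r (sqnorm_eq0 m0) linear0r sqmod0.
set c := sqnorm m; set t := ip r m.
have c_gt0 : 0 < c by rewrite lt_def m_neq0 sqnorm_ge0.
have cC_neq0 : c%:C != 0 by rewrite fmorph_eq0.
have expand : sqnorm (r - (c^-1)%:C *: (t *: m)) = sqnorm r - sqmod t / c.
  apply: complexI; rewrite -ip_sqnorm linearBl !linearBr !linearZl_LR !linearZr_LR /=.
  rewrite -[Num.conj]/(@conjc R) !conjc_real (ipJ r m) -/t.
  by rewrite rmorphB rmorphM /= fmorphV /= sqmodE !ip_sqnorm -/c; field.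
have := near_min ((c^-1)%:C * t); rewrite -scalerA expand.
by rewrite -ler_pdivrMl // mulrC; lra.
Qed.

Definition sqcvg (u : nat -> H) (l : H) := forall eps : R, 0 < eps ->
  exists N, forall n, (N <= n)%N -> sqnorm (u n - l) < eps.

Definition sqcauchy (u : nat -> H) := forall eps : R, 0 < eps ->
  exists N, forall n m, (N <= n)%N -> (N <= m)%N -> sqnorm (u n - u m) < eps.

Lemma hnorm_lt x (e : R) : 0 < e -> (hnorm ip x < e%:C) = (sqnorm x < e ^+ 2).
Proof.
move=> e_gt0; have e_ge0 : 0 <= e%:C by rewrite ler0c ltW.
rewrite /hnorm ip_sqnorm -ltcR rmorphXn /= -{1}(sqrCK e_ge0).
by rewrite ltr_sqrtC ?nnegrE ?exprn_ge0 ?ler0c ?sqnorm_ge0 ?(ltW e_gt0).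
Qed.

Lemma hcvg_sqcvg u l : hcvg ip u l -> sqcvg u l.
Proof.
move=> u_l eps eps_gt0; have sqrt_gt0 : 0 < Num.sqrt eps by rewrite sqrtr_gt0.
have [N hN] : exists N, forall n, (N <= n)%N -> hnorm ip (u n - l) < (Num.sqrt eps)%:C.
  by apply: u_l; rewrite ltcR.
by exists N => n /hN; rewrite hnorm_lt // sqr_sqrtr // ltW.
Qed.

Lemma sqcauchy_hcauchy u : sqcauchy u -> hcauchy ip u.
Proof.
move=> u_cauchy [a b]; rewrite ltcE /= => /andP[/eqP-> a_gt0].
have [N hN] := u_cauchy _ (exprn_gt0 2 a_gt0).
by exists N => n m le_Nn le_Nm; rewrite complexr0 hnorm_lt // hN.
Qed.

Section RangeProjection.
Variables A B : H -> H.
Hypothesis lA : forall (a : R[i]) (x y : H), A (a *: x + y) = a *: A x + A y.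
Hypothesis lB : forall (a : R[i]) (x y : H), B (a *: x + y) = a *: B x + B y.
HB.instance Definition _ := GRing.isLinear.Build R[i] H H *:%R A lA.
HB.instance Definition _ := GRing.isLinear.Build R[i] H H *:%R B lB.

Lemma near_minimizers_close v (d e1 e2 : R) a b :
  (forall x, d <= sqnorm (v - A x)) ->
  sqnorm (v - A a) < d + e1 -> sqnorm (v - A b) < d + e2 ->
  sqnorm (A a - A b) <= 2 * e1 + 2 * e2.
Proof.
move=> d_le near_a near_b.
have mid : (v - A b) + (v - A a) = 2%:R *: (v - A (2%:R^-1 *: (a + b))).
  rewrite scalerBr -linearZ /= scalerA mulfV ?pnatr_eq0 // scale1r linearD /=.
  by rewrite scaler_nat mulr2n opprD addrACA [- A b + _]addrC.
have := sqnorm_parallelogram (v - A b) (v - A a).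
rewrite mid sqnormZ (_ : v - A b - (v - A a) = A a - A b); last first.
  by rewrite opprB addrC addrA subrK.
have := d_le (2%:R^-1 *: (a + b)).
rewrite -(rmorph_nat (real_complex R)) sqmodR; lra.
Qed.

Lemma near_min_limit_orthogonal v d xs z :
  (forall x, d <= sqnorm (v - A x)) ->
  (forall n, sqnorm (v - A (xs n)) < d + n.+1%:R^-1) ->
  sqcvg (A \o xs) (A z) ->
  forall w, ip (v - A z) (A w) = 0.
Proof.
move=> d_le near_d Axs_Az w; set m := A w.
apply: sqmod_eq0; apply/eqP; rewrite eq_le sqmod_ge0 andbT.
apply/ler_addgt0Pr => eps eps_gt0.
have m_ge0 := sqnorm_ge0 m.
set q := eps / (4 * (sqnorm m + 1)).
have q_gt0 : 0 < q by rewrite divr_gt0 // mulr_gt0 //; lra.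
have q_eps : q * (4 * (sqnorm m + 1)) = eps by rewrite divfK //; lra.
have [N1 hN1] := inv_succ_lt q_gt0.
have [N2 hN2] := Axs_Az q q_gt0.
pose n := maxn N1 N2.
have near_n : sqmod (ip (v - A (xs n)) m) <= sqnorm m * n.+1%:R^-1.
  apply: sqmod_ip_le_near_min => s.
  have := d_le (xs n + s *: w); have := near_d n.
  rewrite linearD linearZ /= opprD addrA -/m.
  set k := n.+1%:R^-1; lra.
have split_ip : ip (v - A z) m = ip (v - A (xs n)) m + ip (A (xs n) - A z) m.
  by rewrite -linearDl /= addrA subrK.
have := sqmodD (ip (v - A (xs n)) m) (ip (A (xs n) - A z) m); rewrite -split_ip.
have := sqmod_ip_le (A (xs n) - A z) m.
have := hN1 n (leq_maxl _ _); have := hN2 n (leq_maxr _ _) => /=.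
have := sqnorm_ge0 (A (xs n) - A z); move: m_ge0 near_n q_eps.
set k := n.+1%:R^-1; nra.
Qed.

Hypothesis sqnormAB : forall x, sqnorm (A x) = sqnorm (B x).
Hypothesis closed_rangeB : closed_range ip B.
Hypothesis complete : forall u, hcauchy ip u -> exists l, hcvg ip u l.

Lemma isometric_range_complete xs : sqcauchy (A \o xs) ->
  exists z, sqcvg (A \o xs) (A z).
Proof.
move=> A_cauchy.
have B_cauchy : sqcauchy (B \o xs).
  move=> eps /A_cauchy [N hN]; exists N => n m le_Nn le_Nm.
  by rewrite /= -linearB -sqnormAB linearB; apply: hN.
have [l Bxs_l] := complete (sqcauchy_hcauchy B_cauchy).
have [z l_Bz] := closed_rangeB (fun n => ex_intro _ (xs n) erefl) Bxs_l.
exists z => eps /(hcvg_sqcvg Bxs_l) [N hN]; exists N => n /hN.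
by rewrite /= -linearB sqnormAB linearB l_Bz.
Qed.

Lemma range_orthogonal_decomposition v : exists z, forall w, ip (v - A z) (A w) = 0.
Proof.
have [d [xs [d_le near_d]]] :=
  approx_inf (f := fun x => sqnorm (v - A x)) 0 (fun _ => sqnorm_ge0 _).
have A_cauchy : sqcauchy (A \o xs).
  move=> eps eps_gt0; have [N hN] : exists N, forall n, (N <= n)%N -> n.+1%:R^-1 < eps / 4.
    by apply: inv_succ_lt; rewrite divr_gt0.
  exists N => n m le_Nn le_Nm /=.
  move: (hN n le_Nn) (hN m le_Nm) (near_minimizers_close d_le (near_d n) (near_d m)).
  set kn := n.+1%:R^-1; set km := m.+1%:R^-1; lra.
have [z Axs_Az] := isometric_range_complete A_cauchy.
by exists z; apply: near_min_limit_orthogonal d_le near_d Axs_Az.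
Qed.
End RangeProjection.

Section OrthogonalProjections.
Variables P Q : H -> H.
Hypothesis lP : forall (a : R[i]) (x y : H), P (a *: x + y) = a *: P x + P y.
Hypothesis lQ : forall (a : R[i]) (x y : H), Q (a *: x + y) = a *: Q x + Q y.
HB.instance Definition _ := GRing.isLinear.Build R[i] H H *:%R P lP.
HB.instance Definition _ := GRing.isLinear.Build R[i] H H *:%R Q lQ.
Hypotheses (PP : forall x, P (P x) = P x) (QQ : forall x, Q (Q x) = Q x).
Hypotheses (saP : is_adjoint ip P P) (saQ : is_adjoint ip Q Q).

Lemma orth_proj_eq_of_ker : (forall x, P x = 0 <-> Q x = 0) -> forall x, P x = Q x.
Proof.
move=> kerPQ.
have PQ x : P x = P (Q x).
  by apply/subr0_eq; rewrite -linearB; apply/kerPQ; rewrite linearB /= QQ subrr.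
have QP x : Q x = Q (P x).
  by apply/subr0_eq; rewrite -linearB; apply/kerPQ; rewrite linearB /= PP subrr.
by move=> x; apply: ip_injl => y; rewrite PQ saP saQ -QP -saQ.
Qed.
End OrthogonalProjections.

Section Adjoint.
Variables T Ts : H -> H.
Hypothesis adjT : is_adjoint ip T Ts.

Lemma normal_sqnorm : normal_op T Ts -> forall x, sqnorm (Ts x) = sqnorm (T x).
Proof. by move=> nT x; rewrite /sqnorm (is_adjoint_sym adjT) -nT adjT. Qed.

Lemma normal_ker_eq : normal_op T Ts -> forall x, T x = 0 <-> Ts x = 0.
Proof.
move=> nT x; split=> x0; apply: sqnorm_eq0.
  by rewrite normal_sqnorm // x0 sqnorm0.
by rewrite -normal_sqnorm // x0 sqnorm0.
Qed.

Lemma ker_eq_of_range_eq : (forall y, (exists x, T x = y) <-> (exists x, Ts x = y)) ->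
  forall x, T x = 0 <-> Ts x = 0.
Proof.
have adjTs := is_adjoint_sym adjT.
move=> rangeE x; split=> x0; apply: ip_injr => u; rewrite linear0r.
  have [w Tsw] : exists w, Ts w = T u by apply/rangeE; exists u.
  by rewrite -adjT -Tsw adjTs x0 linear0r.
have [w Tw] : exists w, T w = Ts u by apply/rangeE; exists u.
by rewrite -adjTs -Tw adjT x0 linear0r.
Qed.

Lemma range_cap_ker_adj_eq0 r w : r = T w -> Ts r = 0 -> r = 0.
Proof. by move=> rE r0; apply: ip_eq0; rewrite {1}rE adjT r0 linear0r. Qed.
End Adjoint.

Section MoorePenrose.
Variables T Ts Td : H -> H.
Hypothesis lT : forall (a : R[i]) (x y : H), T (a *: x + y) = a *: T x + T y.
Hypothesis lTs : forall (a : R[i]) (x y : H), Ts (a *: x + y) = a *: Ts x + Ts y.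
Hypothesis lTd : forall (a : R[i]) (x y : H), Td (a *: x + y) = a *: Td x + Td y.
HB.instance Definition _ := GRing.isLinear.Build R[i] H H *:%R T lT.
HB.instance Definition _ := GRing.isLinear.Build R[i] H H *:%R Ts lTs.
HB.instance Definition _ := GRing.isLinear.Build R[i] H H *:%R Td lTd.
Hypothesis adjT : is_adjoint ip T Ts.
Hypothesis mpTd : moore_penrose ip T Td.

Let TTdT x : T (Td (T x)) = T x. Proof. by case: mpTd. Qed.
Let TdTTd x : Td (T (Td x)) = Td x. Proof. by case: mpTd. Qed.
Let TdT_sa : is_adjoint ip (fun x => Td (T x)) (fun x => Td (T x)).
Proof. by case: mpTd. Qed.
Let TTd_sa : is_adjoint ip (fun x => T (Td x)) (fun x => T (Td x)).
Proof. by case: mpTd. Qed.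

Lemma TsTTd y : Ts (T (Td y)) = Ts y.
Proof. by apply: ip_injr => x; rewrite -adjT -TTd_sa TTdT adjT. Qed.

Lemma TdTTs y : Td (T (Ts y)) = Ts y.
Proof. by apply: ip_injr => x; rewrite -TdT_sa -adjT TTdT adjT. Qed.

Lemma normal_SD : normal_op T Ts -> forall x, Ts (Td x) = Td (Ts x).
Proof. by move=> nT x; rewrite -[in RHS]TsTTd nT TdTTs. Qed.

Lemma ker_TTd x : T (Td x) = 0 <-> Ts x = 0.
Proof.
split=> [x0 | Tsx0]; first by rewrite -TsTTd x0 linear0.
by apply: ip_eq0; rewrite adjT TsTTd Tsx0 linear0r.
Qed.

Lemma ker_TdT x : Td (T x) = 0 <-> T x = 0.
Proof. by split=> x0; [rewrite -TTdT x0 linear0 | rewrite x0 linear0]. Qed.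

Section EqualKernels.
Hypothesis kerTTs : forall x, T x = 0 <-> Ts x = 0.

Lemma TTd_TdT x : T (Td x) = Td (T x).
Proof.
have lTTd a u v : T (Td (a *: u + v)) = a *: T (Td u) + T (Td v).
  by rewrite linearP /= linearP.
have lTdT a u v : Td (T (a *: u + v)) = a *: Td (T u) + Td (T v).
  by rewrite linearP /= linearP.
have kerE u : T (Td u) = 0 <-> Td (T u) = 0 by rewrite ker_TTd -kerTTs ker_TdT.
exact: (orth_proj_eq_of_ker lTTd lTdT (fun u => TTdT (Td u)) (fun u => TdTTd (T u))
          TTd_sa TdT_sa kerE).
Qed.

Lemma TTdTs x : T (Td (Ts x)) = Ts x.
Proof. by rewrite TTd_TdT TdTTs. Qed.

Lemma SD_normal : (forall x, Ts (Td x) = Td (Ts x)) -> normal_op T Ts.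
Proof.
by move=> sdT x; rewrite -[in RHS]TsTTd TTd_TdT sdT TTd_TdT TdTTs.
Qed.

Lemma range_T_sub_range_Ts : closed_range ip T ->
  (forall u, hcauchy ip u -> exists l, hcvg ip u l) ->
  normal_op T Ts -> forall x, exists z, Ts z = T x.
Proof.
move=> crT complete nT x.
have [z orth] :=
  range_orthogonal_decomposition lTs lT (normal_sqnorm adjT nT) crT complete (T x).
exists z; set r := T x - Ts z.
have rE : r = T (x - Td (Ts z)) by rewrite linearB /= TTdTs.
have Tsr0 : Ts r = 0.
  by apply/kerTTs/ip_injl => u; rewrite linear0l adjT orth.
by symmetry; apply/subr0_eq/(range_cap_ker_adj_eq0 adjT rE Tsr0).
Qed.
End EqualKernels.
End MoorePenrose.
End InnerProductSpace.

Theorem mainTheorem4 (R : realType) (H : lmodType R[i]) (ip : H -> H -> R[i])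
  (hH : hilbert_space ip) (T Ts Td : H -> H)
  (hT : bounded_op ip T) (hTs : bounded_op ip Ts) (hadj : is_adjoint ip T Ts)
  (hcr : closed_range ip T)
  (hTd : bounded_op ip Td) (hmp : moore_penrose ip T Td) :
  normal_op T Ts <-> EP_op ip T Ts /\ SD_op ip T Ts Td.
Proof.
case: hH hT hTs hTd => hip complete [lT _] [lTs _] [lTd _].
split=> [nT | [[_ rangeE] [_ sdT]]].
- have kerE := normal_ker_eq hip hadj nT.
  split; split=> //; last exact (normal_SD hip hadj hmp nT).
  move=> y; split=> -[x <-].
    exact (range_T_sub_range_Ts hip lT lTs lTd hadj hmp kerE hcr complete nT x).
  by exists (Td (Ts x)); exact (TTdTs hip lT lTs lTd hadj hmp kerE x).
- have kerE := ker_eq_of_range_eq hip hadj rangeE.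
  exact (SD_normal hip lT lTs lTd hadj hmp kerE sdT).
Qed.
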